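(* Let $A$ be an $n\times n$ irreducible nonnegative matrix with largest eigenvalue $1$ and positive $w$ with $Aw=w$, $A^Tw=w$, and let $L=I-A$. Let $S,T\subseteq[n]$ be disjoint with $U=S\cup T$ nonempty, let $a\in\{0,1\}^{U}$ with $a_i=1$ for $i\in S$ and $a_i=0$ for $i\in T$, and let $q\in\mathbb R^n$ satisfy $q_i=w_ia_i$ for $i\in U$ and $(Lq)_i=0$ for $i\notin U$. Then $0\le q_i\le w_i$ for every $i\in[n]$, and $(Lq)_i\ge0$ for every $i\in S$ and $(Lq)_j\le0$ for every $j\in T$. *)

From HB Require Import structures.
From mathcomp Require Import all_boot all_order all_algebra.
From mathcomp Require Import complex.
Set Implicit Arguments. Unset Strict Implicit. Unset Printing Implicit Defensive.
Import Order.TTheory GRing.Theory Num.Theory.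
Local Open Scope ring_scope.

Definition nonneg_mx (R : numDomainType) m n (A : 'M[R]_(m, n)) : Prop :=
  forall i j, 0 <= A i j.

(* Irreducibility of a nonnegative square matrix: its directed graph
   (edge i -> j iff A i j > 0) is strongly connected, i.e. for all i, j
   some power of A has a positive (i,j) entry. *)
Definition irreducible_mx (R : numDomainType) n (A : 'M[R]_n) : Prop :=
  forall i j : 'I_n, exists k : nat, 0 < (A ^+ k) i j.

Definition cmx (R : rcfType) n (A : 'M[R]_n) : 'M[R[i]]_n :=
  map_mx (fun x => (x%:C)%C) A.

Definition spectral_radius_one (R : rcfType) n (A : 'M[R]_n) : Prop :=
  eigenvalue (cmx A) 1 /\ forall z : R[i], eigenvalue (cmx A) z -> `|z| <= 1.

(** Since [A w = w] with [A >= 0] and [w > 0], at every vertex [i] outside [U]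
    where [L q] vanishes the ratio [q i / w i] is a convex combination of the
    ratios at the neighbours of [i], with weights [A i j * w j / w i].  Hence
    the ratio cannot reach its maximum outside [U] without spreading it along
    every edge, and irreducibility carries it into [U]: the ratio is bounded
    by its values on [U], which are [0] and [1].  The signs of [L q] on [S]
    and [T] then follow from [0 <= q <= w] and [A w = w]. *)
From HB Require Import structures.
From mathcomp Require Import all_boot all_order all_algebra.
From mathcomp Require Import complex.
Set Implicit Arguments. Unset Strict Implicit. Unset Printing Implicit Defensive.
Import Order.TTheory GRing.Theory Num.Theory.
Local Open Scope ring_scope.

Section IrreducibleMaximumPrinciple.

Variables (R : realFieldType) (n : nat) (A : 'M[R]_n) (w : 'cV[R]_n).
Hypothesis A_nonneg : nonneg_mx A.
Hypothesis A_irr : irreducible_mx A.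
Hypothesis w_pos : forall i, 0 < w i 0.
Hypothesis Aw : A *m w = w.

Lemma irreducible_edge_closed (X : {set 'I_n}) :
  (forall l j, l \in X -> 0 < A l j -> j \in X) -> X != set0 -> X = setT.
Proof.
move=> closedX /set0Pn [i iX]; apply/setP => j; rewrite in_setT.
apply/negPn/negP => jX.
have powX k l : l \in X -> (A ^+ k) l j = 0.
  elim: k l => [|k IHk] l lX.
    by rewrite expr0 mxE; case: eqP => // elj; move: jX; rewrite -elj lX.
  rewrite exprS -mulmxE mxE big1 // => m _.
  case: (boolP (m \in X)) => mX; first by rewrite IHk // mulr0.
  have := A_nonneg l m; rewrite le_eqVlt => /predU1P [<- | Alm]; first by rewrite mul0r.
  by rewrite (closedX l m lX Alm) in mX.
have [k Akij] := A_irr i j.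
by rewrite powX // ltxx in Akij.
Qed.

Lemma row_sum_w i : \sum_j A i j * w j 0 = w i 0.
Proof. by have := congr1 (fun v : 'cV[R]_n => v i 0) Aw; rewrite mxE. Qed.

Lemma harmonic_max_spread (f : 'I_n -> R) (M : R) l j :
  (forall k, f k <= M * w k 0) -> f l = \sum_k A l k * f k ->
  f l = M * w l 0 -> 0 < A l j -> f j = M * w j 0.
Proof.
move=> fM harm_l fl_max Alj.
have gap_sum0 : \sum_k A l k * (M * w k 0 - f k) = 0.
  under eq_bigr do rewrite mulrBr mulrCA.
  by rewrite sumrB -mulr_sumr row_sum_w -harm_l fl_max subrr.
have : A l j * (M * w j 0 - f j) = 0.
  apply: (psumr_eq0P _ gap_sum0) => // k _.
  by rewrite mulr_ge0 // subr_ge0.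
by move/eqP; rewrite mulf_eq0 gt_eqF //= subr_eq0 => /eqP.
Qed.

Lemma weighted_max_principle (f : 'I_n -> R) (U : {set 'I_n}) (c : R) :
  U != set0 -> (forall i, i \notin U -> f i = \sum_j A i j * f j) ->
  (forall i, i \in U -> f i <= c * w i 0) -> forall i, f i <= c * w i 0.
Proof.
move=> /set0Pn [u uU] harm fU.
pose ratio i := f i / w i 0.
have fE i : f i = ratio i * w i 0 by rewrite divfK // gt_eqF.
have [m _ ratio_max] := @arg_maxP _ _ _ u predT ratio isT.
have fM k : f k <= ratio m * w k 0 by rewrite fE ler_pM2r //; apply: ratio_max.
case: (lerP (ratio m) c) => [Mc | cM].
  by move=> i; apply: le_trans (fM i) _; rewrite ler_pM2r.
pose X := [set k | f k == ratio m * w k 0].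
have notin_U k : k \in X -> k \notin U.
  rewrite inE => /eqP fk; apply/negP => /fU.
  by rewrite fk ler_pM2r // leNgt cM.
have closedX l j : l \in X -> 0 < A l j -> j \in X.
  move=> lX Alj; rewrite inE; apply/eqP.
  apply: (harmonic_max_spread fM (harm l (notin_U l lX)) _ Alj).
  by move: lX; rewrite inE => /eqP.
have X0 : X != set0 by apply/set0Pn; exists m; rewrite inE -fE.
by have := notin_U u; rewrite (irreducible_edge_closed closedX X0) in_setT uU => /(_ isT).
Qed.

Lemma weighted_min_principle (f : 'I_n -> R) (U : {set 'I_n}) (c : R) :
  U != set0 -> (forall i, i \notin U -> f i = \sum_j A i j * f j) ->
  (forall i, i \in U -> c * w i 0 <= f i) -> forall i, c * w i 0 <= f i.
Proof.
move=> U0 harm fU i; rewrite -lerN2 -mulNr.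
apply: (weighted_max_principle (f := fun k => - f k) U0) => [k kU | k kU].
  by rewrite harm // -sumrN; apply: eq_bigr => j _; rewrite mulrN.
by rewrite mulNr lerN2 fU.
Qed.

End IrreducibleMaximumPrinciple.

Theorem lemma5p32 (R : rcfType) (n : nat) (A : 'M[R]_n) (w : 'cV[R]_n)
  (A_nonneg : nonneg_mx A) (A_irr : irreducible_mx A)
  (A_rho : spectral_radius_one A)
  (w_pos : forall i, 0 < w i 0)
  (Aw : A *m w = w) (ATw : A^T *m w = w)
  (S T : {set 'I_n}) (ST_disj : [disjoint S & T]) (U_nonempty : S :|: T != set0)
  (q : 'cV[R]_n)
  (qS : forall i, i \in S -> q i 0 = w i 0 * 1)
  (qT : forall i, i \in T -> q i 0 = w i 0 * 0)
  (Lq0 : forall i, i \notin S :|: T -> ((1%:M - A) *m q) i 0 = 0) :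
  (forall i, 0 <= q i 0 <= w i 0) /\
  (forall i, i \in S -> 0 <= ((1%:M - A) *m q) i 0) /\
  (forall j, j \in T -> ((1%:M - A) *m q) j 0 <= 0).
Proof.
have LqE i : ((1%:M - A) *m q) i 0 = q i 0 - \sum_j A i j * q j 0.
  by rewrite mulmxBl mul1mx !mxE.
have harm i : i \notin S :|: T -> q i 0 = \sum_j A i j * q j 0.
  by move/Lq0/eqP; rewrite LqE subr_eq0 => /eqP.
have qU_le k : k \in S :|: T -> q k 0 <= 1 * w k 0.
  by rewrite inE mul1r => /orP [/qS -> | /qT ->]; rewrite ?mulr1 ?mulr0 // ltW.
have qU_ge k : k \in S :|: T -> 0 * w k 0 <= q k 0.
  by rewrite inE mul0r => /orP [/qS -> | /qT ->]; rewrite ?mulr1 ?mulr0 // ltW.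
have q_le_w := weighted_max_principle A_nonneg A_irr w_pos Aw U_nonempty harm qU_le.
have q_ge0 := weighted_min_principle A_nonneg A_irr w_pos Aw U_nonempty harm qU_ge.
have q_bounds i : 0 <= q i 0 <= w i 0.
  by rewrite -(mul0r (w i 0)) q_ge0 -(mul1r (w i 0)) q_le_w.
split=> //; split=> i.
- move=> /qS qi; rewrite LqE qi mulr1 subr_ge0 -(row_sum_w Aw i).
  by apply: ler_sum => j _; rewrite ler_wpM2l // (andP (q_bounds j)).2.
- move=> /qT qi; rewrite LqE qi mulr0 sub0r oppr_le0.
  by apply: sumr_ge0 => j _; rewrite mulr_ge0 // (andP (q_bounds j)).1.
Qed.
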